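(* Let $k\ge1$, and let $\phi^1,\dots,\phi^k\in[0,1]^d$ be fixed feature attribution vectors (for a fixed input). Let $\mathcal{Q}(\phi)=\mathbb{E}_{\gamma_1,\gamma_2}\big[\lVert\gamma_1\phi-\gamma_2\rVert_2^2\big]$ be a generalized $L2$ metric given by random variables $\gamma_1\in\mathbb{R}^{g\times d}$, $\gamma_2\in\mathbb{R}^g$, and suppose that for all realizations $\lVert\gamma_1\rVert_1\le c_1$ and $\lVert\gamma_1\phi^i-\gamma_2\rVert_2^2\le c_2$ for all $i=1,\dots,k$. Let $\Omega=\{\omega\in\mathbb{R}^k:\omega_i\ge0,\ \sum_{i=1}^k\omega_i=1\}$ and $\phi^{\omega}=\sum_{i=1}^k\omega_i\phi^i$. Let $(\gamma_1^{(j)},\gamma_2^{(j)})$, $j=1,\dots,m$, be i.i.d. samples with the distribution of $(\gamma_1,\gamma_2)$, and let $$\hat\omega\in\arg\min_{\omega\in\Omega}\frac1m\sum_{j=1}^m\lVert\gamma_1^{(j)}\phi^{\omega}-\gamma_2^{(j)}\rVert_2^2.$$ Then there exists a constant $C=C(c_1,c_2)>0$ depending on $c_1$ and $c_2$ such that for every $\delta\in(0,1)$, with probability at least $1-\delta$ over the samples, $$\mathcal{Q}(\phi^{\hat\omega})-\min_{\omega\in\Omega}\mathcal{Q}(\phi^{\omega})\le C\sqrt{\frac{4\log(16k/\delta)}{m}}.$$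
   Context: Feature attributions are normalized, i.e. take values in $[0,1]^d$. A generalized $L2$ metric is a map $\mathcal{Q}:\mathbb{R}^d\to\mathbb{R}$ of the form $\mathcal{Q}(\phi)=\mathbb{E}[\lVert\gamma_1\phi-\gamma_2\rVert_2^2]$ for random $\gamma_1\in\mathbb{R}^{g\times d}$, $\gamma_2\in\mathbb{R}^g$. Here $\lVert\gamma_1\rVert_1$ denotes the sum of the absolute values of the entries of the matrix $\gamma_1$ (so that every entry of $\gamma_1\phi$ is bounded by $\lVert\gamma_1\rVert_1\lVert\phi\rVert_\infty$), and $\log$ is the natural logarithm. *)

From HB Require Import structures.
From mathcomp Require Import all_boot all_order all_algebra.
From mathcomp Require Import all_classical all_reals all_analysis.
Set Implicit Arguments. Unset Strict Implicit. Unset Printing Implicit Defensive.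
Import Order.TTheory GRing.Theory Num.Theory.
Local Open Scope classical_set_scope.
Local Open Scope ring_scope.

(* A realization (gamma1, gamma2) packed as a real tuple of length g*d+g
   (all entries of gamma1, then all entries of gamma2); n.-tuple R carries
   the product (Borel) sigma-algebra of mathcomp-analysis. *)
Definition pack (R : realType) (g d : nat) (A : 'M[R]_(g, d)) (b : 'cV[R]_g)
  : (g * d + g).-tuple R :=
  [tuple (row_mx (mxvec A) b^T) ord0 i | i < g * d + g].

Definition mx_l1 (R : realType) (g d : nat) (A : 'M[R]_(g, d)) : R :=
  \sum_(i < g) \sum_(j < d) `|A i j|.

Definition sqnorm2 (R : realType) (g : nat) (v : 'cV[R]_g) : R :=
  \sum_(i < g) (v i ord0) ^+ 2.

Definition simplex (R : realType) (k : nat) : set ('I_k -> R) :=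
  [set w | (forall i, 0 <= w i) /\ \sum_(i < k) w i = 1].

Definition phi_comb (R : realType) (k d : nat) (phi : 'I_k -> 'cV[R]_d)
  (w : 'I_k -> R) : 'cV[R]_d := \sum_(i < k) w i *: phi i.

Definition genL2 (disp : measure_display) (T : measurableType disp)
  (R : realType) (P : probability T R) (g d : nat)
  (G1 : T -> 'M[R]_(g, d)) (G2 : T -> 'cV[R]_g) (phi : 'cV[R]_d) : R :=
  fine (\int[P]_x (sqnorm2 (G1 x *m phi - G2 x))%:E)%E.

Definition emp_risk (R : realType) (m g d : nat)
  (S1 : 'I_m -> 'M[R]_(g, d)) (S2 : 'I_m -> 'cV[R]_g) (phi : 'cV[R]_d) : R :=
  m%:R^-1 * \sum_(j < m) sqnorm2 (S1 j *m phi - S2 j).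

Definition same_law (disp dV : measure_display) (T : measurableType disp)
  (V : measurableType dV) (R : realType) (P : probability T R)
  (f h : T -> V) : Prop :=
  forall B : set V, measurable B -> P (f @^-1` B) = P (h @^-1` B).

(* mutual independence of the random elements Y_0, ..., Y_(m-1):
   product rule for events A_j in the sigma-algebra generated by Y_j
   (taking A_j = setT covers all finite subfamilies) *)
Definition mutually_independent (disp dV : measure_display)
  (T : measurableType disp) (V : measurableType dV) (R : realType)
  (P : probability T R) (m : nat) (Y : 'I_m -> T -> V) : Prop :=
  forall A : 'I_m -> set T,
    (forall j, preimage_set_system setT (Y j) measurable (A j)) ->
    P (\bigcap_j A j) = (\prod_(j < m) P (A j))%E.

(* The loss at phi^w is a quadratic form in w:
   ||A phi^w - b||^2 = sum_(a,c) w_a w_c <A phi^a - b, A phi^c - b>,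
   so the risk Q(phi^w) and the empirical risk are the quadratic forms on the
   simplex of the k x k matrices M and M^ of means and empirical means of the
   pair losses, all bounded by B = |c2| + 1.  On the simplex a quadratic form
   moves by at most e when each entry of its matrix does, so the empirical
   minimiser has excess risk at most 2 max |M^ - M|.  Hoeffding's bound for the
   2k^2 signed pair losses and a union bound give max |M^ - M| <= t with
   t = 8 B sqrt(4 log(16k/delta)/m) outside an event of probability
   2k^2 exp(-m t^2 / (128 B^2)) = delta^2/128, whence C = 16 B.
   Independence is only assumed for events generated by the samples, so the
   moment generating function in Hoeffding's bound is computed for h(Y_j)
   rounded up to a grid of mesh t/2: the expectation of a product of such
   simple functions is a sum over grid cells of products of probabilities. *)

From HB Require Import structures.
From mathcomp Require Import all_boot all_order all_algebra.
From mathcomp Require Import all_classical all_reals all_analysis.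
From mathcomp Require Import ring lra.
Import Order.TTheory GRing.Theory Num.Theory.
Local Open Scope classical_set_scope.
Local Open Scope ring_scope.
Set Implicit Arguments. Unset Strict Implicit. Unset Printing Implicit Defensive.

Section probability_facts.
Context (disp : measure_display) (T : measurableType disp) (R : realType).
Variable P : probability T R.

Lemma bounded_integrable (f : T -> R) (M : R) : measurable_fun setT f ->
  (forall x, `|f x| <= M) -> P.-integrable setT (EFin \o f).
Proof.
move=> mf fM; apply: measurable_bounded_integrable => //.
  by apply: fin_num_fun_lty; exact: fin_num_measure.
rewrite /bounded_near; near=> y => x _ /=; apply: le_trans (fM x) _; near: y.
by apply: nbhs_pinfty_ge; exact: num_real.
Unshelve. all: end_near.
Qed.

Lemma integrable_wsum (I : Type) (s : seq I) (c : I -> R) (F : I -> T -> R) :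
  (forall i, P.-integrable setT (EFin \o F i)) ->
  P.-integrable setT (EFin \o (fun x => \sum_(i <- s) c i * F i x)).
Proof.
move=> iF; rewrite [X in _.-integrable _ X](_ : _ =
  (fun x => \sum_(i <- s) (c i)%:E * (EFin \o F i) x)%E); last first.
  by apply/funext => x /=; rewrite -sumEFin.
by apply: integrable_sum => // i _; exact: integrableZl.
Qed.

Lemma Rintegral_wsum (I : Type) (s : seq I) (c : I -> R) (F : I -> T -> R) :
  (forall i, P.-integrable setT (EFin \o F i)) ->
  \int[P]_x (\sum_(i <- s) c i * F i x) = \sum_(i <- s) c i * \int[P]_x F i x.
Proof.
move=> iF; elim: s => [|i s IHs].
  by under eq_Rintegral do rewrite big_nil; rewrite big_nil Rintegral_cst // mul0r.
under eq_Rintegral do rewrite big_cons.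
rewrite big_cons RintegralD //; last exact: integrable_wsum.
  by rewrite RintegralZl // IHs.
by have := integrable_wsum [:: i] c iF; under eq_fun do rewrite big_seq1.
Qed.

Lemma Rintegral_indic (A : set T) : measurable A ->
  \int[P]_x (\1_A x : R) = fine (P A).
Proof. by move=> mA; rewrite /Rintegral integral_indic // setIT. Qed.

Lemma Rintegral_probability_cst (r : R) : \int[P]_x r = r.
Proof.
rewrite Rintegral_cst // [fine _](_ : _ = 1) ?mulr1 //.
exact: (congr1 fine (probability_setT P)).
Qed.

Lemma normr_Rintegral_le (f : T -> R) (M : R) : measurable_fun setT f ->
  (forall x, `|f x| <= M) -> `|\int[P]_x f x| <= M.
Proof.
move=> mf fM; rewrite -[leRHS]Rintegral_probability_cst.
apply: le_trans (le_normr_Rintegral _ _) _ => //; first exact: bounded_integrable fM.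
apply: le_Rintegral => //.
- apply: (@bounded_integrable _ M); first exact: measurableT_comp.
  by move=> x; rewrite normr_id.
- by apply: (@bounded_integrable _ `|M|) => //; exact: measurable_cst.
Qed.

Lemma le_probability_wsum (I : finType) (c : I -> R) (A : I -> set T) (D : set T) :
  measurable D -> (forall i, measurable (A i)) -> (forall i, 0 <= c i) ->
  (forall x, D x -> 1 <= \sum_i c i * (\1_(A i) x : R)) ->
  fine (P D) <= \sum_i c i * fine (P (A i)).
Proof.
move=> mD mA c0 DA; rewrite -Rintegral_indic //.
under eq_bigr do rewrite -Rintegral_indic //.
rewrite -Rintegral_wsum; last by move=> i; exact: integrable_indic.
apply: le_Rintegral => //; first exact: integrable_indic.
  by apply: integrable_wsum => i; exact: integrable_indic.
move=> x _; rewrite {1}/indic; case: (boolP (x \in D)) => [/set_mem /DA //|_].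
by apply: sumr_ge0 => i _; rewrite mulr_ge0 // indicE ler0n.
Qed.

Lemma probability_setC_ge (E : set T) (r : R) : measurable E ->
  fine (P (~` E)) <= r -> ((1 - r)%:E <= P E)%E.
Proof.
move=> mE PEr; rewrite -[P E]fineK ?fin_num_measure // lee_fin.
have /(congr1 fine) := probability_setC P mE.
rewrite fineB ?fin_num_measure //= => PEC; lra.
Qed.

End probability_facts.

Lemma expR_le_quadratic (R : realType) (y : R) :
  y <= 1 / 2 -> expR y <= 1 + y + 2 * y ^+ 2.
Proof.
move=> y_le; have yN : 1 - y <= expR (- y) by have := expR_ge1Dx (- y); lra.
have q0 : 0 < 1 + y + 2 * y ^+ 2 by nra.
rewrite -[expR y]invrK -expRN -[leRHS]invrK.
rewrite lef_pV2 ?posrE ?invr_gt0 ?expR_gt0 //.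
apply: le_trans yN; rewrite -(ler_pM2l q0) divff ?gt_eqF //; nra.
Qed.

Section grid.
Variables (R : realType) (B eta : R).
Hypothesis eta0 : 0 < eta.

Definition grid_size := (Num.truncn (2 * B / eta)).+1.
Definition grid_low (v : nat) : R := - B + v%:R * eta.
Definition grid_cell (v : nat) : set R := [set` `[grid_low v, grid_low v + eta[].
Definition grid_index (y : R) : 'I_grid_size := inord (Num.truncn ((y + B) / eta)).

Lemma grid_cell_truncn y (v : nat) :
  grid_cell v y -> Num.truncn ((y + B) / eta) = v.
Proof.
rewrite /grid_cell /grid_low /= in_itv /= => /andP[lo_y y_hi].
apply/truncn_def/andP; split; first by rewrite ler_pdivlMr //; lra.
by rewrite ltr_pdivrMr // mulrSr; lra.
Qed.

Lemma grid_cell_index y : `|y| <= B -> grid_cell (grid_index y) y.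
Proof.
rewrite ler_norml => /andP[By yB].
have y0 : 0 <= (y + B) / eta by rewrite divr_ge0 //; [lra | exact: ltW].
have /andP[lo_y y_hi] := truncn_itv y0.
rewrite ler_pdivlMr // in lo_y; rewrite ltr_pdivrMr // mulrSr in y_hi.
rewrite /grid_cell /grid_low /grid_index /= in_itv /= inordK; first by apply/andP; split; nra.
by rewrite ltnS; apply: le_truncn; rewrite ler_pM2r ?invr_gt0 //; lra.
Qed.

Lemma grid_cell_eq_index y (v : 'I_grid_size) : grid_cell v y -> v = grid_index y.
Proof.
by move=> /grid_cell_truncn yv; apply: val_inj => /=; rewrite /grid_index yv inordK.
Qed.

End grid.

Section hoeffding.
Context (disp dV : measure_display) (T : measurableType disp)
  (V : measurableType dV) (R : realType).
Variables (P : probability T R) (m : nat) (Y : 'I_m -> T -> V) (Y0 : T -> V)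
  (h : V -> R) (B : R).
Hypotheses (mY : forall j, measurable_fun setT (Y j))
  (mY0 : measurable_fun setT Y0) (mh : measurable_fun setT h)
  (hYB : forall j x, `|h (Y j x)| <= B) (hY0B : forall x, `|h (Y0 x)| <= B)
  (B0 : 0 < B) (m0 : (0 < m)%N)
  (law : forall j, same_law P (Y j) Y0) (ind : mutually_independent P Y).

Let mean x := m%:R^-1 * \sum_j h (Y j x).
Let mu := \int[P]_x h (Y0 x).

Lemma measurable_mean_gt (r : R) : measurable [set x | r < mean x].
Proof.
have mmean : measurable_fun setT mean.
  apply: measurable_realfun.measurable_funM; first exact: measurable_cst.
  by apply: measurable_sum => j; exact: measurableT_comp mh (mY j).
rewrite [X in measurable X](_ : _ = setT `&` mean @^-1` `]r, +oo[).
  by apply: mmean => //; exact: measurable_itv.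
by rewrite setTI; apply/seteqP; split => x /=; rewrite in_itv /= andbT.
Qed.

Section discretization.
Variable eta : R.
Hypothesis eta0 : 0 < eta.

Let L := grid_size B eta.
Let top (v : nat) := grid_low B eta v + eta.
Let cell_event (X : T -> V) (v : nat) : set T :=
  setT `&` X @^-1` (setT `&` h @^-1` grid_cell B eta v).
Let p (v : nat) := fine (P (cell_event Y0 v)).
Let path_event (f : {ffun 'I_m -> 'I_L}) : set T :=
  \bigcap_j cell_event (Y j) (f j).

Let measurable_cell_event X v : measurable_fun setT X -> measurable (cell_event X v).
Proof. by move=> mX; apply: mX => //; apply: mh => //; exact: measurable_itv. Qed.

Let measurable_path_event f : measurable (path_event f).
Proof.
apply: fin_bigcap_measurable; first exact: finite_finset.
by move=> j _; exact: measurable_cell_event.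
Qed.

Let top_index y : `|y| <= B -> y < top (grid_index B eta y) <= y + eta.
Proof.
move=> /(grid_cell_index eta0); rewrite /grid_cell /top /= in_itv /=.
by move=> /andP[lo_y y_hi]; apply/andP; split; lra.
Qed.

Lemma probability_path_event f : fine (P (path_event f)) = \prod_j p (f j).
Proof.
rewrite /path_event ind; last first.
  move=> j; exists (setT `&` h @^-1` grid_cell B eta (f j)) => //.
  by apply: mh => //; exact: measurable_itv.
rewrite (eq_bigr (fun j => (p (f j))%:E)) ?prodEFin // => j _.
have mcell : measurable (setT `&` h @^-1` grid_cell B eta (f j)).
  by apply: mh => //; exact: measurable_itv.
rewrite /cell_event setTI (law j mcell) /p fineK ?fin_num_measure //.
  by rewrite /cell_event [in RHS]setTI.
exact: (measurable_cell_event (f j) mY0).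
Qed.

(* Markov's inequality for exp (s * sum_j top (cell of h (Y j))), which dominates
   exp (s * sum_j h (Y j)) and whose expectation factorises over cell paths. *)
Lemma chernoff_grid (s t : R) : 0 <= s ->
  fine (P [set x | mu + t < mean x]) <=
  expR (- (s * (m%:R * (mu + t)))) * (\sum_(v < L) expR (s * top v) * p v) ^+ m.
Proof.
move=> s0; pose c (f : {ffun 'I_m -> 'I_L}) :=
  expR (- (s * (m%:R * (mu + t))) + \sum_j s * top (f j)).
have -> : expR (- (s * (m%:R * (mu + t)))) * (\sum_(v < L) expR (s * top v) * p v) ^+ m
    = \sum_f c f * fine (P (path_event f)).
  under [RHS]eq_bigr do rewrite probability_path_event /c expRD expR_sum -mulrA -big_split.
  rewrite -mulr_sumr -(bigA_distr_bigA (fun (_ : 'I_m) (v : 'I_L) => expR (s * top v) * p v)) /=.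
  by rewrite prodr_const card_ord.
apply: le_probability_wsum => [|f|f|x /= tail_x].
- exact: measurable_mean_gt.
- exact: measurable_path_event.
- exact: expR_ge0.
pose f0 := [ffun j => grid_index B eta (h (Y j x))].
have path_f0 : path_event f0 x.
  by move=> j _; rewrite ffunE; split => //; split => //; exact: grid_cell_index.
rewrite (bigD1 f0) //= {1}/indic mem_set // mulr1.
apply: le_trans (_ : c f0 <= _); last first.
  rewrite lerDl; apply: sumr_ge0 => f _; apply: mulr_ge0; first exact: expR_ge0.
  by rewrite indicE ler0n.
apply: le_trans (expR_ge1Dx _); rewrite lerDl -mulr_sumr -mulrN -mulrDr.
apply: mulr_ge0 => //.
have sum_le_top : \sum_j h (Y j x) <= \sum_j top (f0 j).
  apply: ler_sum => j _; rewrite ffunE.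
  by have /andP[/ltW] := top_index (hYB j x).
have m_pos : (0 : R) < m%:R by rewrite ltr0n.
have : m%:R * (mu + t) < \sum_j h (Y j x).
  by move: tail_x; rewrite /mean -(ltr_pM2l m_pos) mulrA divff ?mul1r ?gt_eqF.
lra.
Qed.

Let expR_top_le (s y : R) : 0 < s -> s * (2 * B) <= 1 / 2 -> eta <= B -> `|y| <= B ->
  expR (s * top (grid_index B eta y)) <= 1 + s * (y + eta) + 8 * s ^+ 2 * B ^+ 2.
Proof.
move=> s0 sB etaB yB; have /andP[y_top top_y] := top_index yB.
move: yB; rewrite ler_norml => /andP[By yB].
have stop_le : s * top (grid_index B eta y) <= 1 / 2.
  by apply: le_trans sB; rewrite ler_pM2l //; lra.
apply: le_trans (expR_le_quadratic stop_le) _.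
have : (s * top (grid_index B eta y)) ^+ 2 <= s ^+ 2 * (4 * B ^+ 2).
  by rewrite exprMn ler_pM2l ?exprn_gt0 // !expr2; nra.
have : s * top (grid_index B eta y) <= s * (y + eta) by rewrite ler_pM2l.
nra.
Qed.

Lemma mgf_grid_le (s : R) : 0 < s -> s * (2 * B) <= 1 / 2 -> eta <= B ->
  \sum_(v < L) expR (s * top v) * p v <= 1 + s * (mu + eta) + 8 * s ^+ 2 * B ^+ 2.
Proof.
move=> s0 sB etaB; pose K := 1 + s * eta + 8 * s ^+ 2 * B ^+ 2.
have mhY0 : measurable_fun setT (fun x => h (Y0 x)) by exact: measurableT_comp.
have mK : measurable_fun setT (fun x => K + s * h (Y0 x)).
  by apply: measurable_realfun.measurable_funD => //; exact: measurable_realfun.measurable_funM.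
have iK : P.-integrable setT (EFin \o (fun x => K + s * h (Y0 x))).
  apply: (@bounded_integrable _ _ _ _ _ (`|K| + s * B)) => // x.
  by apply: le_trans (ler_normD _ _) _; rewrite lerD2l normrM gtr0_norm // ler_pM2l.
have -> : 1 + s * (mu + eta) + 8 * s ^+ 2 * B ^+ 2 = \int[P]_x (K + s * h (Y0 x)).
  rewrite RintegralD //.
  - rewrite Rintegral_probability_cst RintegralZl //; first by rewrite /K /mu; ring.
    exact: bounded_integrable mhY0 hY0B.
  - by apply: (@bounded_integrable _ _ _ _ _ `|K|).
  apply: (@bounded_integrable _ _ _ _ _ (s * B)) => [|x].
    exact: measurable_realfun.measurable_funM.
  by rewrite normrM gtr0_norm // ler_pM2l.
have mcell v : measurable (cell_event Y0 v) by exact: measurable_cell_event.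
have -> : \sum_(v < L) expR (s * top v) * p v =
    \int[P]_x (\sum_(v < L) expR (s * top v) * (\1_(cell_event Y0 v) x : R)).
  rewrite Rintegral_wsum; last by move=> v; exact: integrable_indic.
  by apply: eq_bigr => v _; rewrite Rintegral_indic.
apply: le_Rintegral => //; first by apply: integrable_wsum => v; exact: integrable_indic.
move=> x _; rewrite (bigD1 (grid_index B eta (h (Y0 x)))) //= big1 ?addr0.
  rewrite indicE mem_set ?mulr1; last by split => //; split => //; exact: grid_cell_index.
  by apply: le_trans (expR_top_le s0 sB etaB (hY0B x)) _; rewrite /K; lra.
move=> v v_ne; rewrite indicE; case: (boolP (x \in cell_event Y0 v)); last by rewrite mulr0.
by move=> /set_mem [_ [_ /(grid_cell_eq_index eta0) v_y]]; rewrite v_y eqxx in v_ne.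
Qed.

End discretization.

Lemma hoeffding_upper_tail (t : R) : 0 < t <= 2 * B ->
  fine (P [set x | mu + t < mean x]) <= expR (- (m%:R * t ^+ 2 / (128 * B ^+ 2))).
Proof.
move=> /andP[t0 tB]; pose eta := t / 2; pose s := t / (32 * B ^+ 2).
have eta0 : 0 < eta by rewrite divr_gt0.
have s0 : 0 < s by rewrite divr_gt0 // mulr_gt0 // exprn_gt0.
have sB : s * (2 * B) <= 1 / 2.
  have -> : s * (2 * B) = t / (16 * B) by rewrite /s expr2; field; rewrite gt_eqF.
  by rewrite ler_pdivrMr ?mulr_gt0 //; lra.
have etaB : eta <= B by rewrite /eta; lra.
apply: le_trans (chernoff_grid eta0 t (ltW s0)) _.
set S := \sum_(v < _) _.
have S0 : 0 <= S by apply: sumr_ge0 => v _; rewrite mulr_ge0 ?expR_ge0 ?fine_ge0.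
pose u := s * (mu + eta) + 8 * s ^+ 2 * B ^+ 2.
have S_le : S <= expR u.
  by apply: le_trans (mgf_grid_le eta0 s0 sB etaB) _; rewrite -addrA expR_ge1Dx.
apply: le_trans (_ : expR (- (s * (m%:R * (mu + t)))) * expR (m%:R * u) <= _).
  by rewrite ler_pM2l ?expR_gt0 // expRM_natl lerXn2r ?nnegrE ?expR_ge0.
rewrite -expRD ler_expR le_eqVlt; apply/orP; left; apply/eqP.
by rewrite /u /s /eta; field; rewrite gt_eqF.
Qed.

End hoeffding.

Section uniform_deviation.
Context (disp dV : measure_display) (T : measurableType disp)
  (V : measurableType dV) (R : realType).
Variables (P : probability T R) (m : nat) (Y : 'I_m -> T -> V) (Y0 : T -> V)
  (I : finType) (f : I -> V -> R) (B : R).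
Hypotheses (mY : forall j, measurable_fun setT (Y j))
  (mY0 : measurable_fun setT Y0) (mf : forall i, measurable_fun setT (f i))
  (fYB : forall i j x, `|f i (Y j x)| <= B) (fY0B : forall i x, `|f i (Y0 x)| <= B)
  (B0 : 0 < B) (m0 : (0 < m)%N)
  (law : forall j, same_law P (Y j) Y0) (ind : mutually_independent P Y).

Let mean i x := m%:R^-1 * \sum_j f i (Y j x).
Let mu i := \int[P]_x f i (Y0 x).

Lemma uniform_deviation (t : R) : 0 < t <= 2 * B ->
  exists E : set T, [/\ measurable E,
    fine (P (~` E)) <= (2 * #|I|)%:R * expR (- (m%:R * t ^+ 2 / (128 * B ^+ 2))) &
    forall x, E x -> forall i, `|mean i x - mu i| <= t].
Proof.
move=> t_range; pose sf (p : I * bool) v := (-1) ^+ p.2 * f p.1 v.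
pose D (p : I * bool) := [set x | (-1) ^+ p.2 * mu p.1 + t < (-1) ^+ p.2 * mean p.1 x].
have msf p : measurable_fun setT (sf p) by exact: measurable_realfun.measurable_funM.
have sfYB p j x : `|sf p (Y j x)| <= B by rewrite normrM normr_sign mul1r.
have sfY0B p x : `|sf p (Y0 x)| <= B by rewrite normrM normr_sign mul1r.
have D_tail p : D p = [set x | \int[P]_y sf p (Y0 y) + t < m%:R^-1 * \sum_j sf p (Y j x)].
  rewrite /sf RintegralZl //; last first.
    by apply: (bounded_integrable _ _ (fY0B p.1)); exact: measurableT_comp.
  by apply/funext => x; rewrite /D /mean /mu /= -mulr_sumr [in RHS]mulrCA.
have mD p : measurable (D p) by rewrite D_tail; exact: measurable_mean_gt.
exists (~` \bigcup_(p in setT) D p); split.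
- by apply/measurableC/fin_bigcup_measurable => //; exact: finite_finset.
- rewrite setCK; apply: le_trans (_ : \sum_(p : I * bool) 1 * fine (P (D p)) <= _).
    apply: le_probability_wsum => // [|x [p _ Dpx]].
      by apply: fin_bigcup_measurable => //; exact: finite_finset.
    rewrite (bigD1 p) //= indicE mem_set // mul1r lerDl.
    by apply: sumr_ge0 => q _; rewrite mul1r indicE ler0n.
  apply: le_trans (_ : \sum_(p : I * bool) expR (- (m%:R * t ^+ 2 / (128 * B ^+ 2))) <= _).
    apply: ler_sum => p _; rewrite mul1r D_tail.
    exact: hoeffding_upper_tail.
  by rewrite sumr_const (eq_card_prod (fun=> erefl)) card_bool -(mulr_natl (expR _)) mulnC.
move=> x Ex i; have notD b : ~ D (i, b) x by move=> Dx; apply: Ex; exists (i, b).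
move: (notD true) (notD false); rewrite /D /= expr1 expr0 !mul1r !mulN1r.
move=> /negP; rewrite -leNgt => ? /negP; rewrite -leNgt => ?.
by rewrite ler_norml; apply/andP; split; lra.
Qed.

End uniform_deviation.

Definition qform (R : realType) (k : nat) (M : 'I_k -> 'I_k -> R) (w : 'I_k -> R) : R :=
  \sum_a \sum_c w a * w c * M a c.

Lemma qform_le_add (R : realType) (k : nat) (M N : 'I_k -> 'I_k -> R) (e : R) w :
  simplex w -> (forall a c, M a c <= N a c + e) -> qform M w <= qform N w + e.
Proof.
move=> [w0 w1] MN; have ww1 : \sum_a \sum_c w a * w c = 1.
  by under eq_bigr do rewrite -mulr_sumr w1 mulr1.
rewrite -[X in _ + X]mul1r -ww1 mulr_suml -big_split /=.
apply: ler_sum => a _; rewrite mulr_suml -big_split /=; apply: ler_sum => c _.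
by rewrite -mulrDr ler_wpM2l ?mulr_ge0.
Qed.

Lemma qform_excess_le (R : realType) (k : nat) (M N : 'I_k -> 'I_k -> R) (e : R) u w :
  simplex u -> simplex w -> (forall a c, `|M a c - N a c| <= e) ->
  qform N u <= qform N w -> qform M u - qform M w <= 2 * e.
Proof.
move=> su sw MN Nuw.
have Mu : qform M u <= qform N u + e.
  by apply: qform_le_add => // a c; have := MN a c; rewrite ler_norml; lra.
have Nw : qform N w <= qform M w + e.
  by apply: qform_le_add => // a c; have := MN a c; rewrite ler_norml; lra.
lra.
Qed.

Lemma qform_sub_le (R : realType) (k : nat) (M : 'I_k -> 'I_k -> R) (e : R) u w :
  simplex u -> simplex w -> (forall a c, `|M a c| <= e) ->
  qform M u - qform M w <= 2 * e.
Proof.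
move=> su sw Me; apply: (qform_excess_le (N := fun _ _ => 0)) => // [a c|].
  by rewrite subr0.
by rewrite /qform !big1 // => a _; rewrite big1 // => c _; rewrite mulr0.
Qed.

Lemma sqrt_log_rate_gt0 (R : realType) (k m : nat) (delta : R) :
  (0 < k)%N -> (0 < m)%N -> 0 < delta < 1 ->
  0 < Num.sqrt (4 * ln (16 * k%:R / delta) / m%:R).
Proof.
move=> k0 m0 /andP[delta0 delta1]; have k1 : (1 : R) <= k%:R by rewrite ler1n.
rewrite sqrtr_gt0 divr_gt0 ?ltr0n // mulr_gt0 // ln_gt0 // ltr_pdivlMr //; nra.
Qed.

Lemma deviation_budget_le (R : realType) (k m : nat) (B delta : R) :
  (0 < k)%N -> (0 < m)%N -> 0 < B -> 0 < delta < 1 ->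
  (2 * (k * k))%:R * expR (- (m%:R *
    (8 * B * Num.sqrt (4 * ln (16 * k%:R / delta) / m%:R)) ^+ 2 / (128 * B ^+ 2)))
  <= delta.
Proof.
move=> k0 m0 B0 /andP[delta0 delta1]; set t := 8 * B * _.
have k1 : (1 : R) <= k%:R by rewrite ler1n.
have q1 : 1 < 16 * k%:R / delta by rewrite ltr_pdivlMr //; nra.
have -> : m%:R * t ^+ 2 / (128 * B ^+ 2) = 2%:R * ln (16 * k%:R / delta).
  rewrite /t !exprMn sqr_sqrtr; last first.
    by rewrite ltW // -sqrtr_gt0 sqrt_log_rate_gt0 // delta0 delta1.
  by field; rewrite gt_eqF //= gt_eqF ?ltr0n.
rewrite expRN expRM_natl lnK ?posrE; last by lra.
rewrite -exprVn invf_div.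
have -> : (2 * (k * k))%:R * (delta / (16 * k%:R)) ^+ 2 = delta ^+ 2 / 128.
  by rewrite !natrM; field; rewrite gt_eqF //; lra.
rewrite expr2; nra.
Qed.

Section empirical_risk_minimization.
Context (disp dV : measure_display) (T : measurableType disp)
  (V : measurableType dV) (R : realType).
Variables (P : probability T R) (m : nat) (Y : 'I_m -> T -> V) (Y0 : T -> V)
  (k : nat) (f : 'I_k -> 'I_k -> V -> R) (B : R).
Hypotheses (mY : forall j, measurable_fun setT (Y j))
  (mY0 : measurable_fun setT Y0) (mf : forall a c, measurable_fun setT (f a c))
  (fYB : forall a c j x, `|f a c (Y j x)| <= B)
  (fY0B : forall a c x, `|f a c (Y0 x)| <= B)
  (B0 : 0 < B) (m0 : (0 < m)%N) (k0 : (0 < k)%N)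
  (law : forall j, same_law P (Y j) Y0) (ind : mutually_independent P Y).

Let risk_mx a c := \int[P]_x f a c (Y0 x).
Let emp_mx x a c := m%:R^-1 * \sum_j f a c (Y j x).

Theorem erm_excess_risk (what : T -> 'I_k -> R) (delta : R) :
  0 < delta < 1 -> (forall x, simplex (what x)) ->
  (forall x w, simplex w -> qform (emp_mx x) (what x) <= qform (emp_mx x) w) ->
  exists E : set T, [/\ measurable E, ((1 - delta)%:E <= P E)%E &
    forall x, E x -> forall w, simplex w ->
      qform risk_mx (what x) - qform risk_mx w <=
      16 * B * Num.sqrt (4 * ln (16 * k%:R / delta) / m%:R)].
Proof.
move=> delta01 what_simplex what_erm; have /andP[delta0 delta1] := delta01.
have rt_pos := sqrt_log_rate_gt0 k0 m0 delta01; set rt := Num.sqrt _ in rt_pos *.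
have [rt_big|rt_small] := ltrP (1 / 4) rt.
  exists setT; split => //; first by rewrite probability_setT lee_fin; lra.
  move=> x _ w sw; apply: le_trans (qform_sub_le (what_simplex x) sw _) _.
    by move=> a c; apply: normr_Rintegral_le (fY0B a c); exact: measurableT_comp.
  have : B * (1 / 4) < B * rt by rewrite ltr_pM2l.
  have := B0; lra.
have t_range : 0 < 8 * B * rt <= 2 * B.
  apply/andP; split; first by rewrite !mulr_gt0.
  have : B * rt <= B * (1 / 4) by rewrite ler_pM2l.
  have := B0; lra.
have [E [mE PEC close]] := @uniform_deviation _ _ _ _ _ P m Y Y0 _
  (fun p : 'I_k * 'I_k => f p.1 p.2) B mY mY0 (fun p => mf p.1 p.2)
  (fun p => fYB p.1 p.2) (fun p => fY0B p.1 p.2) B0 m0 law ind _ t_range.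
exists E; split => //.
  apply: probability_setC_ge => //; apply: le_trans PEC _.
  by rewrite (eq_card_prod (fun=> erefl)) !card_ord; exact: deviation_budget_le.
move=> x Ex w sw; apply: le_trans (_ : 2 * (8 * B * rt) <= _); last by lra.
apply: qform_excess_le (what_erm x w sw) => // a c.
by rewrite distrC; exact: (close x Ex (a, c)).
Qed.

End empirical_risk_minimization.

Definition cvdot (R : realType) (g : nat) (u v : 'cV[R]_g) : R :=
  \sum_i u i ord0 * v i ord0.

Lemma normr_cvdot_le (R : realType) (g : nat) (u v : 'cV[R]_g) :
  `|cvdot u v| <= (sqnorm2 u + sqnorm2 v) / 2.
Proof.
rewrite /cvdot /sqnorm2; apply: le_trans (ler_norm_sum _ _ _) _.
rewrite -big_split /= mulr_suml; apply: ler_sum => i _.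
have := sqr_ge0 (u i ord0 - v i ord0); have := sqr_ge0 (u i ord0 + v i ord0).
rewrite !expr2; case: (lerP 0 (u i ord0 * v i ord0)) => uv.
  by rewrite ger0_norm //; nra.
by rewrite ltr0_norm //; nra.
Qed.

Lemma sqnorm2_sum (R : realType) (g k : nat) (w : 'I_k -> R) (u : 'I_k -> 'cV[R]_g) :
  sqnorm2 (\sum_a w a *: u a) = qform (fun a c => cvdot (u a) (u c)) w.
Proof.
rewrite /sqnorm2 /qform /cvdot.
under eq_bigr => i _ do rewrite summxE expr2 mulr_suml.
rewrite exchange_big; apply: eq_bigr => a _.
under eq_bigr => i _ do rewrite mulr_sumr.
rewrite exchange_big; apply: eq_bigr => c _.
by rewrite mulr_sumr; apply: eq_bigr => i _; rewrite !mxE; ring.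
Qed.

Lemma sqnorm2_comb (R : realType) (g d k : nat) (phi : 'I_k -> 'cV[R]_d)
    (w : 'I_k -> R) (A : 'M[R]_(g, d)) (b : 'cV[R]_g) :
  \sum_a w a = 1 ->
  sqnorm2 (A *m phi_comb phi w - b) =
  qform (fun a c => cvdot (A *m phi a - b) (A *m phi c - b)) w.
Proof.
move=> w1; rewrite -sqnorm2_sum /phi_comb mulmx_sumr.
rewrite [X in _ - X](_ : b = \sum_a w a *: b); last by rewrite -scaler_suml w1 scale1r.
by rewrite -sumrB; congr sqnorm2; apply: eq_bigr => a _; rewrite scalerBr scalemxAr.
Qed.

Definition unpack_mx (R : realType) (g d : nat) (y : (g * d + g).-tuple R) : 'M[R]_(g, d) :=
  \matrix_(i, l) tnth y (lshift g (mxvec_index i l)).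

Definition unpack_cv (R : realType) (g d : nat) (y : (g * d + g).-tuple R) : 'cV[R]_g :=
  \col_i tnth y (rshift (g * d) i).

Lemma unpack_mxK (R : realType) (g d : nat) (A : 'M[R]_(g, d)) b :
  unpack_mx (pack A b) = A.
Proof. by apply/matrixP => i l; rewrite !mxE tnth_mktuple row_mxEl mxvecE. Qed.

Lemma unpack_cvK (R : realType) (g d : nat) (A : 'M[R]_(g, d)) b :
  unpack_cv (pack A b) = b.
Proof. by apply/matrixP => i j; rewrite !mxE tnth_mktuple row_mxEr mxE (ord1 j). Qed.

Definition pair_loss (R : realType) (g d k : nat) (phi : 'I_k -> 'cV[R]_d) (a c : 'I_k)
    (y : (g * d + g).-tuple R) : R :=
  cvdot (unpack_mx y *m phi a - unpack_cv y) (unpack_mx y *m phi c - unpack_cv y).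

Lemma pair_loss_pack (R : realType) (g d k : nat) (phi : 'I_k -> 'cV[R]_d) a c
    (A : 'M[R]_(g, d)) (b : 'cV[R]_g) :
  pair_loss phi a c (pack A b) = cvdot (A *m phi a - b) (A *m phi c - b).
Proof. by rewrite /pair_loss unpack_mxK unpack_cvK. Qed.

Lemma normr_pair_loss_pack_le (R : realType) (g d k : nat) (phi : 'I_k -> 'cV[R]_d)
    (A : 'M[R]_(g, d)) (b : 'cV[R]_g) (r : R) a c :
  (forall i, sqnorm2 (A *m phi i - b) <= r) -> `|pair_loss phi a c (pack A b)| <= r.
Proof.
move=> Ar; rewrite pair_loss_pack; apply: le_trans (normr_cvdot_le _ _) _.
by have := Ar a; have := Ar c; lra.
Qed.

Lemma measurable_pair_loss (R : realType) (g d k : nat) (phi : 'I_k -> 'cV[R]_d) a c :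
  measurable_fun setT (@pair_loss R g d k phi a c).
Proof.
have -> : pair_loss phi a c = fun y => \sum_(i < g)
   ((\sum_(l < d) tnth y (lshift g (mxvec_index i l)) * phi a l ord0)
      - tnth y (rshift (g * d) i)) *
   ((\sum_(l < d) tnth y (lshift g (mxvec_index i l)) * phi c l ord0)
      - tnth y (rshift (g * d) i)).
  apply/funext => y; apply: eq_bigr => i _; rewrite !mxE.
  by congr ((_ - _) * (_ - _)); apply: eq_bigr => l _; rewrite mxE.
apply: measurable_sum => i.
apply: measurable_realfun.measurable_funM; apply: measurable_realfun.measurable_funB;
  try exact: measurable_tnth.
all: apply: measurable_sum => l; apply: measurable_realfun.measurable_funM => //.
all: exact: measurable_tnth.
Qed.

Lemma genL2_qform (disp : measure_display) (T : measurableType disp) (R : realType)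
    (P : probability T R) (g d k : nat) (phi : 'I_k -> 'cV[R]_d)
    (G1 : T -> 'M[R]_(g, d)) (G2 : T -> 'cV[R]_g) (r : R) (w : 'I_k -> R) :
  measurable_fun setT (fun x => pack (G1 x) (G2 x)) ->
  (forall x i, sqnorm2 (G1 x *m phi i - G2 x) <= r) -> \sum_a w a = 1 ->
  genL2 P G1 G2 (phi_comb phi w) =
  qform (fun a c => \int[P]_x pair_loss phi a c (pack (G1 x) (G2 x))) w.
Proof.
move=> mG Gr w1; rewrite [LHS](_ : _ = \int[P]_x sqnorm2 (G1 x *m phi_comb phi w - G2 x)) //.
under eq_Rintegral => x _ do rewrite sqnorm2_comb // /qform pair_bigA /=.
rewrite Rintegral_wsum /qform ?pair_bigA /=.
  apply: eq_bigr => p _; congr (_ * _).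
  by apply: eq_Rintegral => x _; rewrite pair_loss_pack.
move=> p; under eq_fun do rewrite -pair_loss_pack.
apply: (bounded_integrable _ _ (fun x => normr_pair_loss_pack_le p.1 p.2 (Gr x))).
exact: measurableT_comp (measurable_pair_loss _ _ _) mG.
Qed.

Lemma emp_risk_qform (R : realType) (m g d k : nat) (phi : 'I_k -> 'cV[R]_d)
    (S1 : 'I_m -> 'M[R]_(g, d)) (S2 : 'I_m -> 'cV[R]_g) (w : 'I_k -> R) :
  \sum_a w a = 1 ->
  emp_risk S1 S2 (phi_comb phi w) =
  qform (fun a c => m%:R^-1 * \sum_j pair_loss phi a c (pack (S1 j) (S2 j))) w.
Proof.
move=> w1; rewrite /emp_risk /qform.
under eq_bigr do rewrite sqnorm2_comb // /qform.
rewrite mulr_sumr; under eq_bigr do rewrite mulr_sumr.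
rewrite exchange_big /=; apply: eq_bigr => a _.
under eq_bigr do rewrite mulr_sumr.
rewrite exchange_big /=; apply: eq_bigr => c _.
rewrite !mulr_sumr; apply: eq_bigr => j _.
by rewrite pair_loss_pack mulrCA.
Qed.

Unset Implicit Arguments.

Theorem theorem4p3 (R : realType) (c1 c2 : R) :
  exists C : R, 0 < C /\
  forall (k d g m : nat) (phi : 'I_k -> 'cV[R]_d)
    (disp : measure_display) (T : measurableType disp) (P : probability T R)
    (G1 : T -> 'M[R]_(g, d)) (G2 : T -> 'cV[R]_g)
    (S1 : 'I_m -> T -> 'M[R]_(g, d)) (S2 : 'I_m -> T -> 'cV[R]_g)
    (what : T -> ('I_k -> R)) (delta : R),
  (0 < k)%N ->
  (0 < m)%N ->
  (forall i a, 0 <= phi i a ord0 <= 1) ->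
  (* (gamma1, gamma2) and the samples are random elements *)
  measurable_fun setT (fun x => pack (G1 x) (G2 x)) ->
  (forall j, measurable_fun setT (fun x => pack (S1 j x) (S2 j x))) ->
  (* bounds for all realizations *)
  (forall x, mx_l1 (G1 x) <= c1) ->
  (forall x i, sqnorm2 (G1 x *m phi i - G2 x) <= c2) ->
  (forall j x, mx_l1 (S1 j x) <= c1) ->
  (forall j x i, sqnorm2 (S1 j x *m phi i - S2 j x) <= c2) ->
  (* the samples are i.i.d. with the law of (gamma1, gamma2) *)
  (forall j, same_law P (fun x => pack (S1 j x) (S2 j x))
                        (fun x => pack (G1 x) (G2 x))) ->
  mutually_independent P (fun j x => pack (S1 j x) (S2 j x)) ->
  (* what is an empirical risk minimizer over the simplex *)
  (forall x, simplex (what x)) ->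
  (forall x w, simplex w ->
     emp_risk (fun j => S1 j x) (fun j => S2 j x) (phi_comb phi (what x))
     <= emp_risk (fun j => S1 j x) (fun j => S2 j x) (phi_comb phi w)) ->
  0 < delta < 1 ->
  exists E : set T, measurable E /\ ((1 - delta)%:E <= P E)%E /\
    forall x, E x -> forall w, simplex w ->
      genL2 P G1 G2 (phi_comb phi (what x)) - genL2 P G1 G2 (phi_comb phi w)
      <= C * Num.sqrt (4 * ln (16 * k%:R / delta) / m%:R).
Proof.
pose B := `|c2| + 1; have B0 : 0 < B by rewrite ltr_pwDr ?normr_ge0.
have c2B : c2 <= B by rewrite /B; have := ler_norm c2; lra.
exists (16 * B); split; first by rewrite mulr_gt0.
move=> k d g m phi disp T P G1 G2 S1 S2 what delta k0 m0 _ mG mS _ hG _ hS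
  law ind what_simplex what_erm delta01.
have lossYB a c j x : `|pair_loss phi a c (pack (S1 j x) (S2 j x))| <= B.
  exact: le_trans (normr_pair_loss_pack_le a c (hS j x)) c2B.
have lossY0B a c x : `|pair_loss phi a c (pack (G1 x) (G2 x))| <= B.
  exact: le_trans (normr_pair_loss_pack_le a c (hG x)) c2B.
have [|E [mE PE excess]] := erm_excess_risk mS mG (measurable_pair_loss phi)
  lossYB lossY0B B0 m0 k0 law ind delta01 what_simplex.
  move=> x w sw; have [_ w1] := sw; have [_ what1] := what_simplex x.
  by rewrite -!emp_risk_qform //; exact: what_erm.
exists E; split => //; split => // x Ex w sw.
have [_ w1] := sw; have [_ what1] := what_simplex x.
by rewrite !(genL2_qform P mG hG) //; exact: excess.
Qed.
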